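(* Let $G$ be a finite simple connected graph whose block tree has more than one vertex, let $B$ be an end block of $G$, and let $u$ be the unique cut vertex of $G$ contained in $B$. Assume every vertex of $B$ other than $u$ is adjacent to $u$. Let $H$ be the graph obtained from $G$ by contracting $B$ into the vertex $u$ (equivalently, deleting $V(B)\setminus\{u\}$). Then $c_{\infty}(H)\ge c_{\infty}(G)$.
   Context: Cops and Robber with an infinitely fast robber: the game is played on a graph $G$. A set of cops first choose initial vertices (several cops may share a vertex); then the robber, knowing their positions, chooses a vertex. Then the players move in alternating rounds, cops first. In the cops' turn each cop either stays or moves to an adjacent vertex; in the robber's turn she either stays or moves along any path of $G$ starting at her current vertex that contains no vertex currently occupied by a cop. The cops win if at some point a cop moves to the vertex occupied by the robber. $c_{\infty}(G)$ is the minimum number of cops for which the cops have a strategy that guarantees a win. A block of $G$ is either a maximal 2-connected subgraph or an edge not contained in any 2-connected subgraph. The block tree $B(G)$ is the bipartite tree whose vertices are the blocks and cut vertices of $G$, a block adjacent to a cut vertex iff it contains it. End blocks are blocks that are leaves of $B(G)$. *)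

From Stdlib Require Import ClassicalEpsilon.
From mathcomp Require Import all_boot.
Set Implicit Arguments. Unset Strict Implicit. Unset Printing Implicit Defensive.

Section Game.
Variables (V : finType) (adj : rel V).

Definition cop_move (x y : V) : bool := (x == y) || adj x y.

Definition robber_reach (k : nat) (C : {ffun 'I_k -> V}) (r r' : V) : bool :=
  connect [rel x y | adj x y && (x \notin codom C) && (y \notin codom C)] r r'.

Fixpoint cops_win_within (k : nat) (n : nat) (C : {ffun 'I_k -> V}) (r : V) : Prop :=
  match n with
  | 0 => False
  | n'.+1 => exists C' : {ffun 'I_k -> V},
      (forall i, cop_move (C i) (C' i)) /\
      ((exists i, C' i = r) \/
       (forall r', robber_reach C' r r' -> cops_win_within n' C' r'))
  end.

Definition cop_win (k : nat) : Prop :=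
  exists C0 : {ffun 'I_k -> V}, forall r : V, exists n, cops_win_within n C0 r.

Definition cop_winb (k : nat) : bool :=
  if excluded_middle_informative (cop_win k) then true else false.

Lemma cop_winb_exists : exists k, cop_winb k.
Proof.
exists #|V|; rewrite /cop_winb; case: excluded_middle_informative => // [[]].
exists [ffun i : 'I_#|V| => enum_val i] => r; exists 1%N.
exists [ffun i : 'I_#|V| => enum_val i]; split.
  by move=> i; rewrite /cop_move eqxx.
by left; exists (enum_rank r); rewrite ffunE enum_rankK.
Qed.

Definition c_infty : nat := ex_minn cop_winb_exists.

End Game.

Section Blocks.
Variables (T : finType) (e : rel T).

Definition conn_in (S : {set T}) : Prop :=
  forall x y, x \in S -> y \in S ->
    connect [rel a b | e a b && (a \in S) && (b \in S)] x y.

Definition two_conn (S : {set T}) : Prop :=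
  (3 <= #|S|) /\ conn_in S /\ (forall v, v \in S -> conn_in (S :\ v)).

(* blocks, given by their vertex sets (blocks are induced subgraphs) *)
Definition block (S : {set T}) : Prop :=
  (two_conn S /\ forall S' : {set T}, S \subset S' -> two_conn S' -> S' = S) \/
  (exists x y, e x y /\ S = [set x; y] /\
     forall S' : {set T}, x \in S' -> y \in S' -> ~ two_conn S').

Definition cut_vertex (v : T) : Prop :=
  exists x y, x != v /\ y != v /\ connect e x y /\
    ~ connect [rel a b | e a b && (a != v) && (b != v)] x y.

(* the block tree (blocks + cut vertices) has more than one vertex *)
Definition block_tree_nontrivial : Prop :=
  (exists B1 B2, block B1 /\ block B2 /\ B1 <> B2) \/ (exists v, cut_vertex v).

(* end block = leaf of the block tree = block containing exactly one cut vertex *)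
Definition end_block (B : {set T}) : Prop :=
  block B /\ exists u, u \in B /\ cut_vertex u /\
    forall w, w \in B -> cut_vertex w -> w = u.

Definition induced_rel (S : {set T}) : rel {x : T | x \in S} :=
  fun x y => e (val x) (val y).

End Blocks.
Arguments induced_rel [T] e S.

From Stdlib Require Import ClassicalEpsilon.
From mathcomp Require Import all_boot.
Set Implicit Arguments. Unset Strict Implicit. Unset Printing Implicit Defensive.

(* A neighbour of a non-cut vertex v of a block B lies in B: otherwise a path
   from it back to B avoiding v closes an ear through v, and B together with
   the ear would be a larger 2-connected set.  Hence B :\ u is attached to the
   rest of G only through u.  In G the cops replay a winning strategy for H
   against the robber's shadow, which is u while she is in B :\ u.  When the
   shadow is caught a cop stands on u; the robber is then confined to B :\ u
   and, u being adjacent to all of B, that cop catches her one move later. *)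

Section InducedConnectivity.
Variables (T : finType) (e : rel T).
Hypothesis esym : symmetric e.

Definition edge_in (X : {set T}) : rel T := [rel a b | e a b && (a \in X) && (b \in X)].

Lemma edge_in_sym (X : {set T}) : symmetric (edge_in X).
Proof. by move=> a b; rewrite /edge_in /= esym andbAC. Qed.

Lemma connect_in_sym (X : {set T}) : connect_sym (edge_in X).
Proof. exact/sym_connect_sym/edge_in_sym. Qed.

Lemma connect_in_subset (X Y : {set T}) (x y : T) :
  X \subset Y -> connect (edge_in X) x y -> connect (edge_in Y) x y.
Proof.
move=> sXY; apply: connect_sub => a b /andP[/andP[eab aX] bX]; apply: connect1.
by rewrite /edge_in /= (subsetP sXY _ aX) (subsetP sXY _ bX) !andbT.
Qed.

Lemma connect_in_mem (X : {set T}) (x y : T) : x \in X -> connect (edge_in X) x y -> y \in X.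
Proof. by move=> xX /closed_connect <- // a b /andP[/andP[_ -> ->]]. Qed.

Lemma path_edge_in (X : {set T}) (a : T) (p : seq T) :
  path e a p -> {subset a :: p <= X} -> path (edge_in X) a p.
Proof.
elim: p a => //= b p IH a /andP[eab pth] sX.
have sXp : {subset b :: p <= X} by move=> z zp; apply: sX; rewrite in_cons zp orbT.
by rewrite IH // andbT /edge_in /= eab sX ?mem_head // sXp ?mem_head.
Qed.

Lemma connect_path_end (X : {set T}) (y a : T) (p : seq T) (x : T) :
  path e a p -> uniq (a :: p) -> {subset a :: p <= X} -> x \in a :: p -> x != y ->
  connect (edge_in (X :\ y)) x a \/ connect (edge_in (X :\ y)) x (last a p).
Proof.
elim: p a => [|b p IH] a /=; first by move=> _ _ _; rewrite inE => /eqP->; left.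
move=> /andP[eab pth] /andP[ap uniq_p] sX.
rewrite in_cons => /orP[/eqP->|xp] xy; first by left.
have sXp : {subset b :: p <= X} by move=> z zp; apply: sX; rewrite in_cons zp orbT.
have [cxb|] := IH b pth uniq_p sXp xp xy; last by right.
have xXy : x \in X :\ y by rewrite in_setD1 xy sXp.
have [ya|ay] := eqVneq y a.
  right; rewrite -{}ya in ap.
  have pth_y : path (edge_in (X :\ y)) b p.
    by apply: path_edge_in => // z zp; rewrite in_setD1 sXp // andbT;
       apply: contraNneq ap => <-.
  apply: connect_trans (path_connect pth_y (mem_last b p)).
  by rewrite connect_in_sym (path_connect pth_y xp).
have bXy := connect_in_mem xXy cxb.
left; apply: connect_trans cxb (connect1 _).
by rewrite /edge_in /= esym eab bXy in_setD1 eq_sym ay sX ?mem_head.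
Qed.

Lemma conn_in_attach (Z X : {set T}) :
  conn_in e Z -> Z \subset X ->
  (forall x, x \in X -> exists2 b, b \in Z & connect (edge_in X) x b) -> conn_in e X.
Proof.
move=> cZ sZX attX x y xX yX.
have [b1 b1Z c1] := attX x xX; have [b2 b2Z c2] := attX y yX.
apply: connect_trans c1 _; rewrite connect_in_sym in c2.
exact: connect_trans (connect_in_subset sZX (cZ _ _ b1Z b2Z)) c2.
Qed.

Lemma conn_in_of_conn_inD1 (X : {set T}) :
  2 < #|X| -> (forall y, y \in X -> conn_in e (X :\ y)) -> conn_in e X.
Proof.
move=> X_gt2 cXD x y xX yX.
have [c cX] : exists2 c, c \in X & c \notin [set x; y].
  apply/subsetPn; apply: contraTN X_gt2 => /subset_leq_card.
  by rewrite -leqNgt cards2 => /leq_trans; apply; case: (_ != _).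
rewrite !inE negb_or => /andP[cx cy].
apply: (connect_in_subset (subD1set X c)); apply: cXD;
  by rewrite // in_setD1 1?eq_sym ?cx ?cy.
Qed.

Lemma conn_inD1_ear (B : {set T}) (a : T) (p : seq T) :
  (forall t, conn_in e (B :\ t)) -> path e a p -> uniq (a :: p) ->
  a \in B -> last a p \in B -> forall y, conn_in e ((B :|: [set x in a :: p]) :\ y).
Proof.
move=> cBD pth uniq_p aB lB y; set X := B :|: _.
apply: (conn_in_attach (cBD y)); first exact/setSD/subsetUl.
move=> x; rewrite in_setD1 => /andP[xy]; case/setUP => [xB|].
  by exists x; rewrite ?in_setD1 ?xy.
rewrite inE => xp.
have sX : {subset a :: p <= X} by move=> z zp; rewrite inE inE zp orbT.
have xXy : x \in X :\ y by rewrite in_setD1 xy sX.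
have endB b : b \in B -> connect (edge_in (X :\ y)) x b ->
    exists2 b', b' \in B :\ y & connect (edge_in (X :\ y)) x b'.
  move=> bB cxb; exists b => //.
  by have := connect_in_mem xXy cxb; rewrite !in_setD1 bB andbT => /andP[].
by case: (connect_path_end pth uniq_p sX xp xy) => /endB; apply.
Qed.

Lemma notin_path_avoid (v a : T) (p : seq T) :
  a != v -> path [rel x y | e x y && (x != v) && (y != v)] a p -> v \notin a :: p.
Proof.
elim: p a => [|b p IH] a av /=; first by rewrite inE eq_sym.
by case/andP=> /andP[/andP[_ _] bv] pth; rewrite in_cons eq_sym negb_or av IH.
Qed.

Lemma block_conn_inD1 (B : {set T}) (t : T) : block e B -> conn_in e (B :\ t).
Proof.
case=> [[[_ [cB cBD]] _]|[x [y [exy [-> _]]]]].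
  have [tB|tB] := boolP (t \in B); first exact: cBD.
  suff -> : B :\ t = B by [].
  by apply/setP=> c; rewrite in_setD1; case: eqP => // ->; rewrite (negPf tB).
move=> a b aS bS; have [->|ab] := eqVneq a b; first exact: connect0.
apply: connect1; rewrite /= aS bS !andbT.
move: aS bS ab; rewrite !inE => /andP[_ /orP[]/eqP->] /andP[_ /orP[]/eqP->];
  by rewrite ?eqxx // esym.
Qed.

Lemma block_maximal (B S : {set T}) : block e B -> B \subset S -> two_conn e S -> S = B.
Proof.
case=> [[_ maxB]|[x [y [_ [-> noS]]]]] sBS tcS; first exact: maxB.
by case: (noS S) => //; apply: (subsetP sBS); rewrite !inE eqxx ?orbT.
Qed.

Lemma nbr_noncut_in_block (B : {set T}) (u v w : T) :
  (forall x y, connect e x y) -> block e B -> u \in B -> v \in B -> u != v ->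
  ~ cut_vertex e v -> e v w -> w \in B.
Proof.
move=> hconn blockB uB vB uv ncut evw; apply/contraT => wB.
set av := [rel x y | e x y && (x != v) && (y != v)].
have wv : w != v by apply: contraNneq wB => ->.
have /connectP[p0 pth0] : connect av w u.
  apply/contraT => nc; case: ncut; exists w, u.
  by do !split=> //; exact/negP.
case/shortenP: pth0 => p pth uniq_p _ ul.
have vp := notin_path_avoid wv pth.
have epth : path e v (w :: p).
  by rewrite /= evw; apply: sub_path pth => x y /andP[/andP[]].
pose X : {set T} := B :|: [set x in v :: w :: p].
have wX : w \in X by rewrite !inE eqxx !orbT.
have tcX : two_conn e X.
  have cXD : forall y, conn_in e (X :\ y).
    apply: (conn_inD1_ear (fun t => block_conn_inD1 (t := t) blockB) epth);
      by rewrite /= ?vp ?uniq_p // -ul.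
  have X_gt2 : 2 < #|X|.
    apply: leq_trans (subset_leq_card (_ : w |: B \subset X)); last first.
      by apply/subsetP=> x /setU1P[->|xB]; rewrite // inE xB.
    rewrite cardsU1 wB add1n ltnS; have := cards2 u v; rewrite uv => <-.
    by apply/subset_leq_card/subsetP=> x /set2P[]->.
  by split; [|split; [exact: conn_in_of_conn_inD1|]].
by move: wX; rewrite /X (block_maximal blockB (subsetUl _ _) tcX) (negPf wB).
Qed.
End InducedConnectivity.

Lemma connect_homo (T T' : finType) (r : rel T) (r' : rel T') (f : T -> T') :
  (forall x y, r x y -> connect r' (f x) (f y)) ->
  forall x y, connect r x y -> connect r' (f x) (f y).
Proof.
move=> hom x y /connectP[p pth ->]; elim: p x pth => [|b p IH] x /=.
  by rewrite connect0.
by case/andP=> /hom rxb /IH; apply: connect_trans.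
Qed.

Section CopsGame.
Variables (V : finType) (adj : rel V).

Lemma cops_win_within_leq k n m (C : {ffun 'I_k -> V}) r :
  n <= m -> cops_win_within adj n C r -> cops_win_within adj m C r.
Proof.
elim: m n C r => [|m IH] [|n] C r //= le_nm [C' [moves win]].
exists C'; split=> //; case: win => [caught|escapes]; first by left.
by right=> r' /escapes; apply: IH.
Qed.

Lemma cop_winbP k : reflect (cop_win adj k) (cop_winb adj k).
Proof. by rewrite /cop_winb; case: excluded_middle_informative; constructor. Qed.

End CopsGame.

Lemma c_infty_le (V V' : finType) (adj : rel V) (adj' : rel V') :
  (forall k, cop_win adj k -> cop_win adj' k) -> c_infty adj' <= c_infty adj.
Proof.
move=> win_transfer; rewrite {2}/c_infty; case: ex_minnP => m /cop_winbP wm _.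
by rewrite /c_infty; case: ex_minnP => m' _; apply; apply/cop_winbP/win_transfer.
Qed.

Section ShadowStrategy.
Variables (T : finType) (e : rel T) (B : {set T}) (u : T).
Hypothesis esym : symmetric e.
Hypothesis u_dominates : forall v, v \in B -> v != u -> e u v.
Hypothesis B_nbr_closed : forall v w, v \in B -> v != u -> e v w -> w \in B.

Local Notation S := (~: (B :\ u)).
Local Notation eH := (induced_rel e S).

Lemma u_in_S : u \in S.
Proof. by rewrite in_setC in_setD1 eqxx. Qed.

Definition shadow (x : T) : {x : T | x \in S} := insubd (exist _ u u_in_S) x.

Lemma val_shadow x : val (shadow x) = if x \in S then x else u.
Proof. by rewrite val_insubd. Qed.

Definition lift_cops k (C : {ffun 'I_k -> {x : T | x \in S}}) : {ffun 'I_k -> T} :=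
  [ffun i => val (C i)].

Lemma mem_codom_lift_cops k (C : {ffun 'I_k -> {x : T | x \in S}}) z :
  z \in S -> (z \in codom (lift_cops C)) = (shadow z \in codom C).
Proof.
move=> zS; apply/codomP/codomP=> [[j ->]|[j zj]]; exists j; rewrite ?ffunE.
  by apply: val_inj; rewrite val_shadow (valP (C j)).
by rewrite -zj val_shadow zS.
Qed.

Lemma shadow_edge x y : e x y -> x \notin S -> shadow x = shadow y.
Proof.
rewrite in_setC negbK in_setD1 => exy /andP[xu xB].
have yB := B_nbr_closed xB xu exy.
apply: val_inj; rewrite !val_shadow !in_setC !in_setD1 xB yB xu /= andbT negbK.
by case: eqP.
Qed.

Lemma robber_reach_shadow k (C : {ffun 'I_k -> {x : T | x \in S}}) r r' :
  robber_reach e (lift_cops C) r r' -> robber_reach eH C (shadow r) (shadow r').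
Proof.
apply: connect_homo => x y /andP[/andP[exy xC] yC].
have [xS|/(shadow_edge exy)->] := boolP (x \in S); last exact: connect0.
have [yS|yS] := boolP (y \in S); last first.
  by rewrite (shadow_edge (_ : e y x) yS) // esym.
apply: connect1; rewrite /= -!mem_codom_lift_cops // xC yC !andbT.
by rewrite /induced_rel !val_shadow xS yS.
Qed.

Lemma trapped_robber_caught k (C : {ffun 'I_k -> T}) i r r' n :
  C i = u -> r \in B :\ u -> robber_reach e C r r' -> cops_win_within e n.+1 C r'.
Proof.
move=> Ciu rBu reach.
have uC : u \in codom C by apply/codomP; exists i.
have closedBu : closed [rel x y | e x y && (x \notin codom C) && (y \notin codom C)] (B :\ u).
  suff in_Bu x y : e x y -> y \notin codom C -> x \in B :\ u -> y \in B :\ u.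
    move=> x y /andP[/andP[exy xC] yC]; apply/idP/idP; first exact: in_Bu.
    by apply: in_Bu; rewrite // esym.
  move=> exy yC /setD1P[xu xB]; rewrite in_setD1 (B_nbr_closed xB xu exy) andbT.
  by apply: contraNneq yC => ->.
have /setD1P[r'u r'B] : r' \in B :\ u by rewrite -(closed_connect closedBu reach).
apply: (@cops_win_within_leq _ _ _ 1) => //.
exists [ffun j => if j == i then r' else C j]; split; last by left; exists i; rewrite ffunE eqxx.
move=> j; rewrite ffunE /cop_move; have [->|ji] := eqVneq j i; last by rewrite eqxx.
by rewrite Ciu u_dominates ?orbT.
Qed.

Lemma cops_win_within_lift n k (C : {ffun 'I_k -> {x : T | x \in S}}) r :
  cops_win_within eH n C (shadow r) -> cops_win_within e n.+1 (lift_cops C) r.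
Proof.
elim: n C r => // n IH C r [C' [moves win]]; exists (lift_cops C'); split.
  move=> i; rewrite !ffunE /cop_move; case/orP: (moves i) => [/eqP->|adj_i].
    by rewrite eqxx.
  by apply/orP; right.
case: win => [[i Ci_r]|escapes].
  have [rS|rS] := boolP (r \in S).
    by left; exists i; rewrite ffunE Ci_r val_shadow rS.
  right=> r'; apply: (trapped_robber_caught (i := i)).
    by rewrite ffunE Ci_r val_shadow (negPf rS).
  by rewrite in_setC negbK in rS.
by right=> r' /robber_reach_shadow /escapes; apply: IH.
Qed.

Lemma cop_win_lift k : cop_win eH k -> cop_win e k.
Proof.
case=> C0 win; exists (lift_cops C0) => r; have [n wn] := win (shadow r).
by exists n.+1; apply: cops_win_within_lift.
Qed.

End ShadowStrategy.

Theorem mainTheorem11 (T : finType) (e : rel T) (B : {set T}) (u : T) :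
  symmetric e -> irreflexive e -> (forall x y, connect e x y) ->
  block_tree_nontrivial e ->
  end_block e B ->
  u \in B -> cut_vertex e u -> (forall w, w \in B -> cut_vertex e w -> w = u) ->
  (forall v, v \in B -> v != u -> e u v) ->
  c_infty (induced_rel e (~: (B :\ u))) >= c_infty e.
Proof.
move=> esym _ hconn _ [blockB _] uB _ only_cut_u u_dom.
apply: c_infty_le => k; apply: (cop_win_lift esym u_dom) => v w vB vu.
apply: (nbr_noncut_in_block esym hconn blockB uB vB); first by rewrite eq_sym.
by move=> /(only_cut_u _ vB) /eqP; apply/negP.
Qed.
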